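(* Let $\mathcal{M}\subset\mathbb{R}^n$ be a locally symmetric $C^2$ submanifold and let $\sigma_*\in\Sigma^n$ be such that $\mathcal{M}\cap B(y,\rho)\subseteq\Delta(\sigma_* )$ for some $y\in\mathcal{M}$ and $\rho>0$. Then for every $\bar x\in\mathcal{M}$ and every $\delta>0$, $\mathcal{M}\cap\Delta(\sigma_* )\cap B(\bar x,\delta)\ne\emptyset$.
   Context: $\Sigma^n$ permutations of $\mathbb{N}_n$ acting by $(\sigma x)_i=x_{\sigma^{-1}(i)}$; $P(\sigma)$ orbit partition; $P(x)$ partition by equal coordinates; $\Delta(\sigma)=\{x:P(x)=P(\sigma)\}$. $\mathbb{R}^n_\ge=\{x:x_1\ge\cdots\ge x_n\}$; $B$ open ball. A set $S$ is locally symmetric if $S\cap\mathbb{R}^n_\ge\ne\emptyset$ and each $x\in S$ has $\delta>0$ with $\sigma(S\cap B(x,\delta))=S\cap B(x,\delta)$ for all $y\in S\cap B(x,\delta)$, all $\sigma$ with $\sigma y=y$. A locally symmetric $C^2$ submanifold is a connected $C^2$ submanifold without boundary which is locally symmetric. *)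

From HB Require Import structures.
From mathcomp Require Import all_boot all_order all_algebra all_fingroup.
From mathcomp Require Import all_classical all_reals all_analysis.
Set Implicit Arguments. Unset Strict Implicit. Unset Printing Implicit Defensive.
Import Order.TTheory GRing.Theory Num.Theory.
Import numFieldNormedType.Exports.
Local Open Scope classical_set_scope.
Local Open Scope ring_scope.

Section Defs.
Variables (R : realType) (n : nat).
Local Notation vec := 'rV[R]_n.

Definition pact (s : {perm 'I_n}) (x : vec) : vec := \row_i x 0 (s^-1 i)%g.

Definition Pperm (s : {perm 'I_n}) : {set {set 'I_n}} := porbits s.

Definition Pvec (x : vec) : {set {set 'I_n}} :=
  [set (finset (fun j => x 0 j == x 0 i)) | i : 'I_n]%SET.

Definition Delta (s : {perm 'I_n}) : set vec := [set x | Pvec x = Pperm s].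

Definition Rge_cone : set vec := [set x | forall i j : 'I_n, (i <= j)%N -> x 0 j <= x 0 i].

Definition enorm (x : vec) : R := Num.sqrt (\sum_i x 0 i ^+ 2).
Definition eball (x : vec) (r : R) : set vec := [set z | enorm (z - x) < r].

Definition locally_symmetric (S : set vec) : Prop :=
  (S `&` Rge_cone !=set0) /\
  forall x, S x -> exists2 d : R, 0 < d &
    forall y, (S `&` eball x d) y ->
      forall s : {perm 'I_n}, pact s y = y ->
        pact s @` (S `&` eball x d) = S `&` eball x d.

Definition evec (j : 'I_n) : vec := delta_mx 0 j.
Definition pderiv m (j : 'I_n) (F : vec -> 'rV[R]_m) : vec -> 'rV[R]_m :=
  fun x => 'D_(evec j) F x.

Definition C2_on m (U : set vec) (F : vec -> 'rV[R]_m) : Prop :=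
  forall x, U x ->
    [/\ {for x, continuous F},
        forall j, derivable F x (evec j) /\ {for x, continuous (pderiv j F)}
      & forall j k, derivable (pderiv j F) x (evec k) /\
                    {for x, continuous (pderiv k (pderiv j F))}].

Definition jacobian m (F : vec -> 'rV[R]_m) (x : vec) : 'M[R]_(m, n) :=
  \matrix_(i < m, j < n) (pderiv j F x) 0 i.

Definition C2_submanifold (M : set vec) : Prop :=
  exists m : nat, forall p, M p ->
    exists U : set vec, exists F : vec -> 'rV[R]_m,
      [/\ open U, U p, C2_on U F,
          (forall x, U x -> \rank (jacobian F x) = m)
        & M `&` U = U `&` [set x | F x = 0]].

Definition locally_symmetric_C2_submanifold (M : set vec) : Prop :=
  [/\ connected M, C2_submanifold M & locally_symmetric M].

End Defs.

(* Call the tie domain of x the set of points of M near which every point of M keeps all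
   the coordinate ties x_i = x_j of x. It is open in M by definition. It is also closed
   in M: if points of M breaking a tie x_i = x_j accumulated at a limit w of the domain,
   the transposition (i j), which fixes w, would map them back into M by local symmetry,
   forcing e_i - e_j to be tangent to M at w; a quantitative implicit function argument
   then produces points of M breaking the tie arbitrarily close to points of the domain.
   As M is connected, a nonempty tie domain is all of M. The domain of y contains y, so
   every point of M keeps the ties of y. A point x0 near xbar with a locally maximal
   number of distinct coordinates lies in its own domain, so y keeps the ties of x0 as
   well: x0 has the equality pattern of y, that of sigma. *)

From Pilot Require Import Defs.
From HB Require Import structures.
From mathcomp Require Import all_boot all_order all_algebra all_fingroup.
From mathcomp Require Import all_classical all_reals all_analysis.
From mathcomp Require Import lra ring.
Import Order.TTheory GRing.Theory Num.Theory.
Import numFieldNormedType.Exports.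
Local Open Scope classical_set_scope.
Local Open Scope ring_scope.
Set Implicit Arguments. Unset Strict Implicit. Unset Printing Implicit Defensive.

Section MatrixNorm.
Variable R : realType.

Lemma mx_norm_coord_le m n (v : 'M[R]_(m, n)) i j : `|v i j| <= `|v|.
Proof.
rewrite [leRHS]/Num.Def.normr /= mx_normrE; apply/bigmax_geP; right => /=.
by exists (i, j).
Qed.

Lemma mx_norm_coordB_le m n (a b : 'M[R]_(m, n)) i j : `|a i j - b i j| <= `|a - b|.
Proof. by have := mx_norm_coord_le (a - b) i j; rewrite !mxE. Qed.

Lemma mx_norm_le m n (v : 'M[R]_(m, n)) c :
  0 <= c -> (forall i j, `|v i j| <= c) -> `|v| <= c.
Proof.
move=> c0 vc; rewrite [leLHS]/Num.Def.normr /= mx_normrE.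
by apply: bigmax_le => // -[i j] _; exact: vc.
Qed.

Definition mx_l1 m n (B : 'M[R]_(m, n)) : R := \sum_i \sum_j `|B i j|.

Lemma mx_l1_ge0 m n (B : 'M[R]_(m, n)) : 0 <= mx_l1 B.
Proof. by apply: sumr_ge0 => i _; apply: sumr_ge0. Qed.

Lemma norm_mulmx_le m n (u : 'rV[R]_m) (B : 'M[R]_(m, n)) :
  `|u *m B| <= `|u| * mx_l1 B.
Proof.
apply: mx_norm_le; first by rewrite mulr_ge0 // mx_l1_ge0.
move=> i k; rewrite mxE (le_trans (ler_norm_sum _ _ _)) //.
rewrite /mx_l1 mulr_sumr; apply: ler_sum => j _.
rewrite normrM (ord1 i) ler_pM // ?mx_norm_coord_le //.
by rewrite (bigD1 k) //= lerDl sumr_ge0.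
Qed.

Lemma enorm_le_norm n (v : 'rV[R]_n) : enorm v <= n.+1%:R * `|v|.
Proof.
rewrite /enorm -[leRHS]ger0_norm ?mulr_ge0 // -sqrtr_sqr.
rewrite ler_sqrt ?sqr_ge0 //.
apply: (@le_trans _ _ (\sum_(i < n) `|v| ^+ 2)).
  apply: ler_sum => i _; rewrite -real_normK ?num_real //.
  by rewrite lerXn2r // ?nnegrE // mx_norm_coord_le.
rewrite sumr_const card_ord -[_ *+ n]mulr_natl exprMn.
apply: ler_wpM2r; first exact: sqr_ge0.
rewrite -natrX ler_nat; case: n {v} => // n.
by rewrite (leq_trans (leqnSn _)) // expnS leq_pmulr.
Qed.

Lemma eball_norm_lt n (c z : 'rV[R]_n) e : `|z - c| < e / n.+1%:R -> eball c e z.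
Proof.
move=> zc; rewrite /eball /=; apply: le_lt_trans (enorm_le_norm _) _.
by rewrite mulrC -ltr_pdivlMr.
Qed.

End MatrixNorm.

Section Ties.
Variables (R : realType) (n : nat).
Local Notation vec := 'rV[R]_n.

(* The partition [Pvec z] is coarser than [Pvec x]. *)
Definition keeps_ties (x z : vec) := forall i j, x 0 i = x 0 j -> z 0 i = z 0 j.

Lemma Pvec_keeps_ties (x z : vec) : Pvec x = Pvec z -> keeps_ties x z.
Proof.
move=> Exz i j xij.
have : finset (fun k => x 0 k == x 0 i) \in Pvec z by rewrite -Exz imset_f.
case/imsetP => k _ /setP Ek.
by have := Ek i; have := Ek j; rewrite !inE xij eqxx => /esym/eqP <- /esym/eqP.
Qed.

Lemma keeps_ties_Pvec (x z : vec) : keeps_ties x z -> keeps_ties z x -> Pvec x = Pvec z.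
Proof.
move=> xz zx; apply: eq_imset => i; apply/setP => j; rewrite !inE.
by apply/eqP/eqP => [/esym/xz/esym|/esym/zx/esym].
Qed.

Lemma Delta_keeps_ties (s : {perm 'I_n}) (x z : vec) :
  Delta s x -> Delta s z -> keeps_ties x z.
Proof. by rewrite /Delta /= => xs zs; apply: Pvec_keeps_ties; rewrite xs zs. Qed.

Lemma closed_coord_eq (i j : 'I_n) : closed [set z : vec | z 0 i = z 0 j].
Proof.
have cont : continuous (fun z : vec => z 0 i - z 0 j).
  move=> z; have ci := @coord_continuous R 1 n 0 i z.
  have cj := @coord_continuous R 1 n 0 j z.
  exact: (cvgB ci cj).
suff -> : [set z : vec | z 0 i = z 0 j] =
    (fun z : vec => z 0 i - z 0 j) @^-1` [set x | x = 0].
  by apply: (continuous_closedP _).1 cont _ _; exact: closed_eq.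
by apply/seteqP; split=> z /= => [->|/eqP]; rewrite ?subrr // subr_eq0 => /eqP.
Qed.

Lemma closed_keeps_ties (x : vec) : closed [set z | keeps_ties x z].
Proof.
suff -> : [set z | keeps_ties x z] =
  \bigcap_(ij in [set ij | x 0 ij.1 = x 0 ij.2]) [set z | z 0 ij.1 = z 0 ij.2].
  by apply: closed_bigI => -[i j] _; exact: closed_coord_eq.
apply/seteqP; split => [z xz [i j] /= /xz|z xz i j xij] //.
exact: (xz (i, j)).
Qed.

End Ties.

Section Transposition.
Variables (R : realType) (n : nat).
Local Notation vec := 'rV[R]_n.

Lemma pact_tperm_id (x : vec) i j : x 0 i = x 0 j -> pact (tperm i j) x = x.
Proof. by move=> xij; apply/rowP => k; rewrite mxE tpermV; case: tpermP => [->|->|]. Qed.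

Lemma pactB (s : {perm 'I_n}) (a b : vec) : pact s (a - b) = pact s a - pact s b.
Proof. by apply/rowP => k; rewrite !mxE. Qed.

Lemma norm_pact (s : {perm 'I_n}) (v : vec) : `|pact s v| = `|v|.
Proof.
apply/le_anti/andP; split; apply: mx_norm_le => // i j; rewrite (ord1 i).
  by rewrite mxE mx_norm_coord_le.
by have := mx_norm_coord_le (pact s v) 0 (s j); rewrite mxE permK.
Qed.

Lemma pact_tperm_subr (q : vec) i j : i != j ->
  pact (tperm i j) q - q = (q 0 j - q 0 i) *: (evec R i - evec R j).
Proof.
move=> ij; apply/rowP => k; rewrite !mxE tpermV /=.
case: tpermP => [->|->|/eqP ki /eqP kj].
- by rewrite eqxx (negbTE ij) /=; lra.
- by rewrite eqxx eq_sym (negbTE ij) /=; lra.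
- by rewrite (negbTE ki) (negbTE kj) /=; lra.
Qed.

Lemma norm_evecB_le (i j : 'I_n) : `|evec R i - evec R j : vec| <= 1.
Proof.
apply: mx_norm_le => // a k; rewrite !mxE (ord1 a) /=.
by case: (k == i); case: (k == j); rewrite /= ?subrr ?subr0 ?sub0r ?normrN ?normr0 ?normr1.
Qed.

End Transposition.

Section MeanValue.
Variable R : realType.

Lemma mvt_affine_le (g dg : R -> R) (a b c e : R) : a <= b ->
  (forall t, a <= t <= b -> is_derive t 1 g (dg t) /\ `|dg t - c| <= e) ->
  `|g b - g a - c * (b - a)| <= e * (b - a).
Proof.
move=> ab gab.
have D : forall t, t \in `]a, b[ -> is_derive t 1 g (dg t).
  move=> t; rewrite in_itv /= => /andP[/ltW ta /ltW tb].
  by apply: (gab t _).1; rewrite ta tb.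
have C : {within `[a, b], continuous g}.
  apply: derivable_within_continuous => t; rewrite in_itv /= => /gab[+ _].
  by case.
have [xi + ->] := MVT_segment ab D C.
rewrite in_itv /= => /gab[_ dxi].
rewrite -mulrBl normrM [`|b - a|]ger0_norm ?subr_ge0 //.
by apply: ler_wpM2r; rewrite ?subr_ge0.
Qed.

Lemma mvt_affine_le_from0 (g dg : R -> R) (h c e : R) :
  (forall t, (0 <= t <= h) \/ (h <= t <= 0) ->
     is_derive t 1 g (dg t) /\ `|dg t - c| <= e) ->
  `|g h - g 0 - c * h| <= e * `|h|.
Proof.
move=> gh; have [h0|h0] := leP 0 h.
  have := @mvt_affine_le g dg 0 h c e h0; rewrite !subr0 [`|h|]ger0_norm //.
  by apply=> t th; apply: gh; left.
have := @mvt_affine_le g dg h 0 c e (ltW h0); rewrite sub0r [`|h|]ltr0_norm //.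
have -> : g h - g 0 - c * h = - (g 0 - g h - c * - h) by ring.
by rewrite normrN; apply=> t th; apply: gh; right.
Qed.

End MeanValue.

Section StrictDifferentiability.
Variable R : realType.

Lemma is_derive_line m n (F : 'rV[R]_n -> 'rV[R]_m) (p v : 'rV[R]_n) k t :
  derivable F (p + t *: v) v ->
  is_derive t 1 (fun s : R => F (p + s *: v) 0 k) ('D_v F (p + t *: v) 0 k).
Proof.
move=> dF.
set Q := fun h : R => h^-1 *: ((F \o shift (p + t *: v)) (h *: v) - F (p + t *: v)).
have HQ : Q @ 0^' --> 'D_v F (p + t *: v) := dF.
have HQk : (fun h => Q h 0 k) @ 0^' --> 'D_v F (p + t *: v) 0 k.
  exact: (continuous_cvg _ (@coord_continuous _ _ _ 0 k _) HQ).
set G := fun s : R => F (p + s *: v) 0 k.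
have EQ : (fun h : R => h^-1 *: ((G \o shift t) (h *: 1) - G t)) = (fun h => Q h 0 k).
  apply/funext => h; rewrite /G /Q /= !mxE.
  congr (_ * (_ - _)); congr (F _ 0 k).
  by rewrite [h%:A]mulr1 scalerDl addrCA addrA [_ + p]addrC.
split.
  by apply/cvg_ex; exists ('D_v F (p + t *: v) 0 k); rewrite /= EQ.
by rewrite /derive /= EQ; apply: cvg_lim.
Qed.

Lemma line_increment_le m n (F : 'rV[R]_n -> 'rV[R]_m) (p v : 'rV[R]_n) k h c e :
  (forall t, (0 <= t <= h) \/ (h <= t <= 0) ->
     derivable F (p + t *: v) v /\ `|'D_v F (p + t *: v) 0 k - c| <= e) ->
  `|F (p + h *: v) 0 k - F p 0 k - c * h| <= e * `|h|.
Proof.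
move=> Fpv; have := @mvt_affine_le_from0 R (fun t => F (p + t *: v) 0 k)
  (fun t => 'D_v F (p + t *: v) 0 k) h c e.
rewrite /= scale0r addr0; apply=> t /Fpv[dF De]; split=> //.
exact: is_derive_line.
Qed.

Definition coord_path n (z z' : 'rV[R]_n) (l : nat) : 'rV[R]_n :=
  \row_c (if (c < l)%N then z' 0 c else z 0 c).

Lemma coord_path0 n (z z' : 'rV[R]_n) : coord_path z z' 0 = z.
Proof. by apply/rowP => c; rewrite !mxE. Qed.

Lemma coord_pathn n (z z' : 'rV[R]_n) : coord_path z z' n = z'.
Proof. by apply/rowP => c; rewrite !mxE ltn_ord. Qed.

Lemma coord_pathS n (z z' : 'rV[R]_n) (j : 'I_n) :
  coord_path z z' j.+1 = coord_path z z' j + (z' 0 j - z 0 j) *: evec R j.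
Proof.
apply/rowP => c; rewrite !mxE /= ltnS leq_eqVlt eq_sym.
have [->|cj] := eqVneq j c; first by rewrite eqxx ltnn /= mulr1; ring.
rewrite (_ : (j == c :> nat) = false) /= ?mulr0 ?addr0 //.
exact: negbTE cj.
Qed.

Lemma coord_path_dist_le n (z z' w : 'rV[R]_n) (j : 'I_n) t :
  (0 <= t <= z' 0 j - z 0 j) \/ (z' 0 j - z 0 j <= t <= 0) ->
  `|coord_path z z' j + t *: evec R j - w| <= Num.max `|z - w| `|z' - w|.
Proof.
move=> tin; apply: mx_norm_le => [|i c]; first by rewrite le_max normr_ge0.
rewrite (ord1 i) !mxE /=.
have [<-|jc] := eqVneq j c; last by rewrite mulr0 addr0; case: ifP => _;
  rewrite (le_trans (mx_norm_coordB_le _ _ _ _)) // le_max lexx ?orbT.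
have zj := mx_norm_coordB_le z w 0 j; have z'j := mx_norm_coordB_le z' w 0 j.
rewrite ltnn mulr1 ler_norml.
move: zj z'j; rewrite !ler_norml => /andP[? ?] /andP[? ?].
have ? : `|z - w| <= Num.max `|z - w| `|z' - w| by rewrite le_max lexx.
have ? : `|z' - w| <= Num.max `|z - w| `|z' - w| by rewrite le_max lexx orbT.
by apply/andP; split; case: tin => /andP[? ?]; lra.
Qed.

(* Mean value theorem along each edge of [coord_path z z']. *)
Lemma partials_strict_approx m n (F : 'rV[R]_n -> 'rV[R]_m) (w : 'rV[R]_n) r0 :
  0 < r0 ->
  (forall z j, `|z - w| < r0 -> derivable F z (evec R j)) ->
  (forall j, {for w, continuous (pderiv j F)}) ->
  forall eps, 0 < eps -> exists2 r, 0 < r & r <= r0 /\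
   forall z z', `|z - w| < r -> `|z' - w| < r ->
   `|F z' - F z - (z' - z) *m (Defs.jacobian F w)^T| <= eps * `|z' - z|.
Proof.
move=> r00 dF cF eps eps0.
pose e := eps / n.+1%:R.
have e0 : 0 < e by rewrite divr_gt0.
have near_w : \forall z \near w, forall j, `|pderiv j F w - pderiv j F z| < e.
  apply: (@filter_forall _ _
    (fun j z => `|pderiv j F w - pderiv j F z| < e) (nbhs w) _) => j.
  by have := cF j; move/cvgrPdist_lt => /(_ _ e0).
have [r1 r10 Hr1] := (nbhs_normP _ _).1 near_w.
exists (Num.min r0 r1); first by rewrite lt_min r00 r10.
split=> [|z z' zw z'w]; first by rewrite ge_min lexx.
have zz'w : Num.max `|z - w| `|z' - w| < Num.min r0 r1 by rewrite gt_max zw z'w.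
apply: mx_norm_le => [|i k]; first by rewrite mulr_ge0 // ltW.
rewrite (ord1 i) !mxE.
have -> : F z' 0 k - F z 0 k =
    \sum_(j < n) (F (coord_path z z' j.+1) 0 k - F (coord_path z z' j) 0 k).
  rewrite -(big_mkord xpredT (fun j => F (coord_path z z' j.+1) 0 k
                                     - F (coord_path z z' j) 0 k)).
  by rewrite telescope_sumr // coord_path0 coord_pathn.
rewrite -sumrB; apply: (le_trans (ler_norm_sum _ _ _)).
apply: (@le_trans _ _ (\sum_(j < n) e * `|z' - z|)); last first.
  rewrite sumr_const card_ord -mulr_natl mulrA ler_wpM2r //.
  by rewrite /e mulrCA ger_pMr // ler_pdivrMr // mul1r ler_nat.
apply: ler_sum => j _; rewrite !mxE coord_pathS.
apply: (@le_trans _ _ (e * `|z' 0 j - z 0 j|)).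
  rewrite [_ * pderiv j F w 0 k]mulrC.
  apply: line_increment_le => t /(coord_path_dist_le w) /le_lt_trans /(_ zz'w).
  rewrite lt_min => /andP[tr0 tr1]; split; first exact: dF.
  have := Hr1 (coord_path z z' j + t *: evec R j).
  rewrite /ball_ /= distrC => /(_ tr1) /(_ j) /ltW; apply: le_trans.
  by rewrite distrC mx_norm_coordB_le.
by rewrite ler_wpM2l ?(ltW e0) // mx_norm_coordB_le.
Qed.

End StrictDifferentiability.

(* Makes [banach_fixed_point] applicable to row vectors: the library declares completeness
   of matrices but not their structure of complete normed module. *)
HB.instance Definition _ (R : realType) (m n : nat) := Complete.on 'M[R]_(m, n).

Section QuantitativeZero.
Variable R : realType.

(* Newton-type fixed point: [z = a + u B] with [u] a fixed point of [u |-> u - F (a + u B)],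
   which is a 1/2-contraction of a closed ball because [B *m A = 1]. *)
Lemma exists_zero_near m n (F : 'rV[R]_n -> 'rV[R]_m) (A : 'M[R]_(n, m))
    (B : 'M[R]_(m, n)) (w : 'rV[R]_n) (r eps : R) :
  B *m A = 1%:M -> 0 <= eps -> eps * mx_l1 B <= 2^-1 ->
  (forall z z', `|z - w| < r -> `|z' - w| < r ->
     `|F z' - F z - (z' - z) *m A| <= eps * `|z' - z|) ->
  forall a, `|a - w| < r / 2 -> 2 * mx_l1 B * `|F a| < r / 2 ->
  exists z, [/\ F z = 0, `|z - w| < r & `|z - a| <= 2 * mx_l1 B * `|F a|].
Proof.
move=> BA eps0 epsB Fapprox a aw Fa.
set KB := mx_l1 B; have KB0 : 0 <= KB := mx_l1_ge0 B.
set rho := 2 * `|F a|; have rho0 : 0 <= rho by rewrite mulr_ge0.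
pose U := [set u : 'rV[R]_m | `|u| <= rho].
pose T u := u - F (a + u *m B).
have uB u : U u -> `|u *m B| <= rho * KB.
  by move=> Uu; apply: le_trans (norm_mulmx_le _ _) _; exact: ler_wpM2r.
have aUw u : U u -> `|a + u *m B - w| < r.
  move=> /uB Hu; rewrite addrAC; apply: le_lt_trans (ler_normD _ _) _.
  rewrite [r]splitr; apply: ltr_leD => //; apply: le_trans Hu (ltW _).
  by rewrite /rho mulrAC.
have BB u u' : a + u *m B - (a + u' *m B) = (u - u') *m B.
  by rewrite opprD addrACA subrr add0r -mulmxBl.
have T_lip u u' : U u -> U u' -> `|T u - T u'| <= 2^-1 * `|u - u'|.
  move=> Uu Uu'.
  have -> : T u - T u' = - (F (a + u *m B) - F (a + u' *m B)
                          - ((a + u *m B) - (a + u' *m B)) *m A).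
    by rewrite BB -mulmxA BA mulmx1 /T; apply/rowP => i; rewrite !mxE; ring.
  rewrite normrN; apply: le_trans (Fapprox _ _ (aUw _ Uu') (aUw _ Uu)) _.
  rewrite BB; apply: le_trans (ler_wpM2l eps0 (norm_mulmx_le _ _)) _.
  by rewrite mulrCA mulrC ler_wpM2r // mulrC.
have TU u : U u -> U (T u).
  have T0 : T 0 = - F a by rewrite /T mul0mx addr0 sub0r.
  move=> Uu; have := T_lip u 0 Uu; rewrite /U /= normr0 => /(_ rho0).
  rewrite T0 subr0 => Tu.
  rewrite -(subrK (- F a) (T u)); apply: le_trans (ler_normD _ _) _.
  rewrite normrN (splitr rho); apply: lerD.
    by apply: le_trans Tu _; rewrite mulrC ler_wpM2r // invr_ge0.
  by rewrite /rho mulrAC divff ?mul1r.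
pose Tf : {fun U >-> U} := HB.pack T (isFun.Build _ _ U U T TU).
have ctr : is_contraction Tf.
  exists (2^-1)%:nng; split; first by rewrite /= invf_lt1 // ltr1n.
  by move=> [x1 x2] [/= Ux1 Ux2]; exact: T_lip.
have clU : closed U.
  exact: (continuous_closedP _).1 (@norm_continuous _ _) _ (@closed_le R rho).
have U0 : U 0 by rewrite /U /= normr0.
have [p Up Tp] := banach_fixed_point ctr clU (ex_intro _ 0 U0).
exists (a + p *m B); split.
- have -> : F (a + p *m B) = p - Tf p by rewrite /= /T opprB addrCA subrr addr0.
  by rewrite -Tp subrr.
- exact: aUw.
- by rewrite addrAC subrr add0r; apply: le_trans (uB p Up) _; rewrite /rho mulrAC.
Qed.

End QuantitativeZero.

Section LocalStructure.
Variables (R : realType) (n : nat).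
Local Notation vec := 'rV[R]_n.

Lemma C2_submanifold_chart (M : set vec) (w : vec) : C2_submanifold M -> M w ->
  exists m (F : vec -> 'rV[R]_m) (A : 'M[R]_(n, m)) (B : 'M[R]_(m, n)),
  B *m A = 1%:M /\
  forall eps, 0 < eps -> exists2 r, 0 < r &
    forall z z', `|z - w| < r -> `|z' - w| < r ->
      (M z <-> F z = 0) /\ `|F z' - F z - (z' - z) *m A| <= eps * `|z' - z|.
Proof.
move=> [m chart] Mw; have [U [F [oU Uw C2F rkF MU]]] := chart w Mw.
have [r0 r00 r0U] := (nbhs_normP _ _).1 (@open_nbhs_nbhs _ w U (conj oU Uw)).
have {}r0U z : `|z - w| < r0 -> U z.
  by move=> zw; apply: r0U; rewrite /ball_ /= distrC.
have dF z j : `|z - w| < r0 -> derivable F z (evec R j).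
  by move=> /r0U Uz; have [_ /(_ j) []] := C2F z Uz.
have cF j : {for w, continuous (pderiv j F)} by have [_ /(_ j) []] := C2F w Uw.
have [B BA] : exists B, B *m (Defs.jacobian F w)^T = 1%:M.
  by apply/row_fullP; rewrite /row_full mxrank_tr rkF.
exists m, F, (Defs.jacobian F w)^T, B; split=> // eps eps0.
have [r r_gt0 [rr0 approx]] := partials_strict_approx r00 dF cF eps0.
exists r => // z z' zw z'w; split; last exact: approx.
have Uz : U z by apply: r0U; exact: lt_le_trans rr0.
split=> [Mz|Fz].
  by have : (M `&` U) z by []; rewrite MU => -[].
by have : (U `&` [set x | F x = 0]) z by []; rewrite -MU => -[].
Qed.

Lemma locally_symmetric_tperm (M : set vec) (w : vec) : locally_symmetric M -> M w ->
  exists2 d, 0 < d & forall q i j, w 0 i = w 0 j -> M q -> `|q - w| < d ->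
    M (pact (tperm i j) q).
Proof.
move=> [_ symM] Mw; have [d d0 symd] := symM w Mw.
exists (d / n.+1%:R); first by rewrite divr_gt0.
move=> q i j wij Mq qw.
have Ww : (M `&` eball w d) w.
  by split=> //; apply: eball_norm_lt; rewrite subrr normr0 divr_gt0.
have : (pact (tperm i j) @` (M `&` eball w d)) (pact (tperm i j) q).
  by exists q => //; split=> //; exact: eball_norm_lt.
by rewrite (symd w Ww _ (pact_tperm_id wij)) => -[].
Qed.

Lemma split_tie_neq (p z : vec) i j t : i != j -> p 0 i = p 0 j -> 0 < t ->
  `|z - (p + t *: (evec R i - evec R j))| <= t / 2 -> z 0 i != z 0 j.
Proof.
move=> ij pij t0 zp; apply/eqP => zij.
have := mx_norm_coordB_le z (p + t *: (evec R i - evec R j)) 0 i.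
have := mx_norm_coordB_le z (p + t *: (evec R i - evec R j)) 0 j.
rewrite !mxE /= !eqxx (negbTE ij) eq_sym (negbTE ij) zij pij.
move=> /le_trans /(_ zp) + /le_trans /(_ zp); rewrite !ler_norml.
by rewrite /= mulr0n mulr1n => /andP[? ?] /andP[? ?]; lra.
Qed.

Lemma zero_near_segment m (F : vec -> 'rV[R]_m) (A : 'M[R]_(n, m)) (B : 'M[R]_(m, n))
    (w : vec) (r eps : R) (p u : vec) (t : R) :
  B *m A = 1%:M -> 0 <= eps -> eps * mx_l1 B <= 8^-1 ->
  (forall z z', `|z - w| < r -> `|z' - w| < r ->
     `|F z' - F z - (z' - z) *m A| <= eps * `|z' - z|) ->
  F p = 0 -> `|p - w| < r / 4 -> `|u| <= 1 -> `|u *m A| <= eps ->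
  0 < t -> t <= r / 8 ->
  exists z, [/\ F z = 0, `|z - w| < r & `|z - (p + t *: u)| <= t / 2].
Proof.
move=> BA eps0 epsB approx Fp pw u1 uA t0 tr.
have KB0 := mx_l1_ge0 B.
have tu : `|t *: u| <= t by rewrite normrZ gtr0_norm // ler_piMr // ltW.
have aw : `|p + t *: u - w| < r / 2.
  by rewrite addrAC; apply: le_lt_trans (ler_normD _ _) _; lra.
have Fa : `|F (p + t *: u)| <= 2 * eps * t.
  have := approx p (p + t *: u) ltac:(lra) ltac:(lra).
  rewrite Fp subr0 addrAC subrr add0r -scalemxAl => Fa.
  have := ler_normD (F (p + t *: u) - t *: (u *m A)) (t *: (u *m A)).
  rewrite subrK !normrZ gtr0_norm // => /le_trans; apply.
  have : eps * `|t *: u| <= eps * t by rewrite ler_wpM2l.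
  have : t * `|u *m A| <= t * eps by rewrite ler_wpM2l // ltW.
  by lra.
have KFa : 2 * mx_l1 B * `|F (p + t *: u)| <= t / 2.
  have : mx_l1 B * `|F (p + t *: u)| <= mx_l1 B * (2 * eps * t) by rewrite ler_wpM2l.
  by nra.
have [z [Fz zw za]] := exists_zero_near BA eps0 ltac:(lra) approx aw ltac:(lra).
by exists z; split=> //; exact: le_trans KFa.
Qed.

Lemma tperm_zeros_direction m (F : vec -> 'rV[R]_m) (A : 'M[R]_(n, m)) (w : vec)
    (r eps : R) (q : vec) i j :
  (forall z z', `|z - w| < r -> `|z' - w| < r ->
     `|F z' - F z - (z' - z) *m A| <= eps * `|z' - z|) ->
  0 <= eps -> F q = 0 -> F (pact (tperm i j) q) = 0 ->
  `|q - w| < r -> `|pact (tperm i j) q - w| < r -> q 0 i != q 0 j ->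
  `|(evec R i - evec R j) *m A| <= eps.
Proof.
move=> approx eps0 Fq Fq' qw q'w qij.
have ij : i != j by apply: contraNneq qij => ->.
have := approx q _ qw q'w.
rewrite Fq Fq' subrr sub0r normrN pact_tperm_subr // -scalemxAl !normrZ mulrCA.
have c0 : 0 < `|q 0 j - q 0 i| by rewrite normr_gt0 subr_eq0 eq_sym.
rewrite ler_pM2l // => /le_trans; apply.
by rewrite -[leRHS]mulr1 ler_wpM2l // norm_evecB_le.
Qed.

End LocalStructure.

Section TieDomain.
Variables (R : realType) (n : nat).
Local Notation vec := 'rV[R]_n.

Definition tie_domain (M : set vec) (x : vec) : set vec :=
  M `&` [set z | M z -> keeps_ties x z]°.

Lemma tie_domain_keeps_ties (M : set vec) x p : tie_domain M x p -> keeps_ties x p.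
Proof. by move=> [Mp /nbhs_singleton]; apply. Qed.

Lemma closure_tie_domain_keeps_ties (M : set vec) x :
  closure (tie_domain M x) `<=` [set z | keeps_ties x z].
Proof.
rewrite ((closure_id _).1 (closed_keeps_ties (x := x))).
by apply: closure_subset => p /tie_domain_keeps_ties.
Qed.

Section Chart.
Variables (M : set vec) (w : vec) (m : nat) (F : vec -> 'rV[R]_m).
Variables (A : 'M[R]_(n, m)) (B : 'M[R]_(m, n)) (r eps : R).
Hypotheses (BA : B *m A = 1%:M) (eps0 : 0 < eps) (epsB : eps * mx_l1 B <= 8^-1).
Hypothesis MF : forall z, `|z - w| < r -> M z <-> F z = 0.
Hypothesis approx : forall z z', `|z - w| < r -> `|z' - w| < r ->
  `|F z' - F z - (z' - z) *m A| <= eps * `|z' - z|.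

Lemma tie_domain_transversal x p i j : tie_domain M x p -> `|p - w| < r / 4 ->
  i != j -> x 0 i = x 0 j -> eps < `|(evec R i - evec R j) *m A|.
Proof.
move=> Dp pw ij xij; rewrite ltNge; apply/negP => uA.
have [Mp /nbhs_normP[r' r'0 pr']] := Dp.
have r0 : 0 < r by have := normr_ge0 (p - w); lra.
pose t := Num.min (r / 8) (r' / 4).
have t0 : 0 < t by rewrite lt_min !divr_gt0.
have [tr tr'] : t <= r / 8 /\ t <= r' / 4 by split; rewrite ge_min lexx ?orbT.
have [z [Fz zw zp]] := zero_near_segment BA (ltW eps0) epsB approx
  ((MF (z := p) ltac:(lra)).1 Mp) pw (norm_evecB_le R i j) uA t0 tr.
have tu : `|t *: (evec R i - evec R j)| <= t.
  by rewrite normrZ gtr0_norm // ler_piMr ?(norm_evecB_le R) // ltW.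
have zp' : `|z - p| < r'.
  have -> : z - p = z - (p + t *: (evec R i - evec R j)) + t *: (evec R i - evec R j).
    by rewrite opprD addrA subrK.
  by apply: le_lt_trans (ler_normD _ _) _; lra.
have zij : z 0 i = z 0 j.
  have zpr : ball_ Num.norm p r' z by rewrite /ball_ /= distrC.
  exact: pr' z zpr ((MF zw).2 Fz) i j xij.
by move: (split_tie_neq ij (tie_domain_keeps_ties Dp xij) t0 zp); rewrite zij eqxx.
Qed.

End Chart.

Lemma tie_domain_closed (M : set vec) x w :
  C2_submanifold M -> locally_symmetric M -> M w ->
  closure (tie_domain M x) w -> tie_domain M x w.
Proof.
move=> manM symM Mw clw; split=> //.
have [d d0 Mtperm] := locally_symmetric_tperm symM Mw.
have [m [F [A [B [BA chart]]]]] := C2_submanifold_chart manM Mw.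
pose eps := (8 * (mx_l1 B + 1))^-1.
have KB0 := mx_l1_ge0 B.
have eps0 : 0 < eps by rewrite invr_gt0 mulr_gt0 // ltr_wpDl.
have epsB : eps * mx_l1 B <= 8^-1.
  have : eps * (mx_l1 B + 1) = 8^-1 by rewrite /eps; field; rewrite lt0r_neq0 ?ltr_wpDl.
  by rewrite mulrDr mulr1; lra.
have [r r0 Fw] := chart _ eps0.
have MF z : `|z - w| < r -> M z <-> F z = 0 by move=> zw; exact: (Fw z z zw zw).1.
have approx z z' : `|z - w| < r -> `|z' - w| < r ->
    `|F z' - F z - (z' - z) *m A| <= eps * `|z' - z|.
  by move=> zw z'w; exact: (Fw z z' zw z'w).2.
apply: contrapT => /nbhs_normP nearw.
have [q [qw /not_implyP[Mq /existsNP[i /existsNP[j /not_implyP[xij /eqP qij]]]]]] :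
    exists q, `|q - w| < Num.min (r / 4) d /\ ~ (M q -> keeps_ties x q).
  apply: contrapT => /forallNP noq; apply: nearw; exists (Num.min (r / 4) d).
    by rewrite /= lt_min d0 divr_gt0.
  move=> z; rewrite /ball_ /= distrC => zw.
  by have /not_andP[//|/contrapT] := noq z.
move: qw; rewrite lt_min => /andP[qw qd].
have ij : i != j by apply: contraNneq qij => ->.
have wij : w 0 i = w 0 j := closure_tie_domain_keeps_ties clw xij.
have q'w : `|pact (tperm i j) q - w| < r / 4.
  by rewrite -[X in _ - X](pact_tperm_id wij) -pactB norm_pact.
have uA := tperm_zeros_direction approx (ltW eps0) ((MF q ltac:(lra)).1 Mq)
  ((MF _ ltac:(lra)).1 (Mtperm q i j wij Mq qd)) ltac:(lra) ltac:(lra) qij.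
have /clw[p [Dp pw]] : nbhs w (ball_ Num.norm w (r / 4)).
  by apply/(nbhs_normP w); exists (r / 4) => //=; rewrite divr_gt0.
move: pw; rewrite /ball_ /= distrC => pw.
have := tie_domain_transversal BA eps0 epsB MF approx Dp pw ij xij.
by rewrite ltNge uA.
Qed.

End TieDomain.

Section Connectedness.
Variables (R : realType) (n : nat).
Local Notation vec := 'rV[R]_n.

Lemma tie_domain_keeps_ties_all (M : set vec) x p z :
  locally_symmetric_C2_submanifold M -> tie_domain M x p -> M z -> keeps_ties x z.
Proof.
move=> [conM manM symM] Dp.
suff <- : tie_domain M x = M by move/tie_domain_keeps_ties.
apply: conM; first by exists p.
  by exists [set z | M z -> keeps_ties x z]°; first exact: open_interior.
exists (closure (tie_domain M x)); first exact: closed_closure.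
apply/seteqP; split=> [q Dq|q [Mq clq]]; last exact: tie_domain_closed.
by split; [case: Dq | exact: subset_closure].
Qed.

Definition distinct_pairs (z : vec) : {set 'I_n * 'I_n} :=
  [set ij | z 0 ij.1 != z 0 ij.2].

Lemma keeps_tiesP (x z : vec) :
  keeps_ties x z <-> distinct_pairs z \subset distinct_pairs x.
Proof.
split=> [xz|zx i j xij].
  by apply/fintype.subsetP => -[i j]; rewrite !inE; apply: contra_neq => /xz.
apply/eqP; apply: contraT => zij.
by have := fintype.subsetP zx (i, j); rewrite !inE xij eqxx => /(_ zij).
Qed.

Lemma near_distinct_pairs (x : vec) :
  \forall z \near x, distinct_pairs x \subset distinct_pairs z.
Proof.
have near_ij ij : \forall z \near x, ij \in distinct_pairs x -> ij \in distinct_pairs z.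
  case: ij => i j; rewrite inE /=.
  have [xij|/eqP xij] := eqVneq (x 0 i) (x 0 j).
    by apply/(nbhs_normP x); exists 1 => //=; rewrite ltr01.
  have oij : open (~` [set z : vec | z 0 i = z 0 j]).
    exact/closed_openC/closed_coord_eq.
  apply: filterS (@open_nbhs_nbhs _ x _ (conj oij xij)) => z /eqP zij _.
  by rewrite inE.
apply: filterS (@filter_forall _ _ (fun ij (z : vec) =>
  ij \in distinct_pairs x -> ij \in distinct_pairs z) (nbhs x) _ near_ij) => z xz.
by apply/fintype.subsetP => ij; exact: xz.
Qed.

Lemma exists_tie_domain_self (M : set vec) (xbar : vec) e : M xbar -> 0 < e ->
  exists2 x0, `|x0 - xbar| < e & tie_domain M x0 x0.
Proof.
move=> Mxbar e0.
pose P k := `[< exists z, [/\ M z, `|z - xbar| < e & #|distinct_pairs z| = k] >].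
have exP : exists k, P k.
  by exists #|distinct_pairs xbar|; apply/asboolP; exists xbar; rewrite subrr normr0.
have ubP k : P k -> (k <= #|{: 'I_n * 'I_n}|)%N.
  by move=> /asboolP[z [_ _ <-]]; exact: max_card.
have [k /asboolP[x0 [Mx0 x0b <-]] kmax] := ex_maxnP exP ubP.
exists x0 => //; split=> //.
have near_ball : \forall z \near x0, `|z - xbar| < e.
  apply/(nbhs_normP x0); exists (e - `|x0 - xbar|); rewrite /= ?subr_gt0 // => z.
  rewrite /ball_ /= => x0z; have -> : z - xbar = (z - x0) + (x0 - xbar).
    by rewrite addrA subrK.
  by apply: le_lt_trans (ler_normD _ _) _; rewrite distrC in x0z; lra.
apply: filterS2 near_ball (near_distinct_pairs x0) => z zb sub Mz.
have le_card : (#|distinct_pairs z| <= #|distinct_pairs x0|)%N.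
  by apply: kmax; apply/asboolP; exists z.
apply/keeps_tiesP; suff -> : distinct_pairs z = distinct_pairs x0 by [].
by apply/esym/eqP; rewrite eqEcard sub.
Qed.

End Connectedness.

Theorem corollary3p24 (R : realType) (n : nat) (M : set 'rV[R]_n)
    (s : {perm 'I_n}) (y : 'rV[R]_n) (rho : R) :
  locally_symmetric_C2_submanifold M ->
  M y -> 0 < rho -> M `&` eball y rho `<=` Delta s ->
  forall (xbar : 'rV[R]_n) (delta : R), M xbar -> 0 < delta ->
    M `&` Delta s `&` eball xbar delta !=set0.
Proof.
move=> symM My rho0 Dnear xbar delta Mxbar delta0.
have Dy : Delta s y.
  by apply: Dnear; split=> //; apply: eball_norm_lt; rewrite subrr normr0 divr_gt0.
have Ty : tie_domain M y y.
  split=> //; apply/(nbhs_normP y); exists (rho / n.+1%:R); first by rewrite /= divr_gt0.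
  move=> z; rewrite /ball_ /= distrC => zy Mz.
  by apply: Delta_keeps_ties Dy _; apply: Dnear; split=> //; exact: eball_norm_lt.
have [x0 x0xbar Tx0] := exists_tie_domain_self Mxbar (divr_gt0 delta0 (ltr0Sn _ n)).
have Mx0 : M x0 by case: Tx0.
exists x0; split; [split=> // | exact: eball_norm_lt].
rewrite /Delta /= (keeps_ties_Pvec (tie_domain_keeps_ties_all symM Tx0 My)
  (tie_domain_keeps_ties_all symM Ty Mx0)).
by rewrite /Delta in Dy.
Qed.
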